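(* Let $c_1=2$, let $c_2\ge4$ be a real number, let $c_3\in(0,1)$, and let $c_4=8H$ where $H\ge2$. Define $g_1(m)=-c_3m+c_1\sqrt{m}\ln(c_2m)+c_4\ln(m)$. Then for all real $m\ge2$, $$g_1(m)\le\frac{132c_1c_4}{c_3}\left[\ln\!\left(\frac{10\sqrt{c_2c_4}}{c_3}\right)\right]^2.$$ *)

From Stdlib Require Import Reals.
Open Scope R_scope.

Definition g1 (c1 c2 c3 c4 m : R) : R :=
  - c3 * m + c1 * sqrt m * ln (c2 * m) + c4 * ln m.

From Stdlib Require Import Reals Lra.
From Coquelicot Require Import Rcomplements.
Open Scope R_scope.

(* Write m = s^2 and split -c3 s^2 into three equal parts.  Each part absorbs
   one of the growing terms 2 s ln c2, 4 s ln s and 2 c4 ln s: the logarithms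
   of s are first replaced by tangent lines of ln at 24/c3 and c4/c3 (slopes
   c3/24 and c3/c4), after which every part is a concave quadratic in s,
   bounded by its maximum.  The resulting constant is then compared with
   L = ln (10 sqrt (c2 c4) / c3) using L >= 1, c3 < 1 and c4 >= 16. *)

Lemma quadratic_le (a b x : R) : 0 < a -> b * x - a * x ^ 2 <= b ^ 2 / (4 * a).
Proof.
  intro ha.
  replace (b ^ 2 / (4 * a)) with (b * x - a * x ^ 2 + (2 * a * x - b) ^ 2 / (4 * a))
    by (field; lra).
  assert (0 <= (2 * a * x - b) ^ 2 / (4 * a)).
  { apply Rdiv_le_0_compat; [apply pow2_ge_0 | lra]. }
  lra.
Qed.

Lemma ln_le_tangent (t s : R) : 0 < t -> 0 < s -> ln s <= ln t + (s - t) / t.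
Proof.
  intros ht hs.
  pose proof (exp_ineq1_le (ln (s / t))) as hexp.
  rewrite exp_ln, ln_div in hexp by (try apply Rdiv_lt_0_compat; lra).
  replace ((s - t) / t) with (s / t - 1) by (field; lra).
  lra.
Qed.

Lemma ln_sqrt (x : R) : 0 < x -> ln (sqrt x) = ln x / 2.
Proof.
  intro hx.
  rewrite <- (sqrt_sqrt x) at 2 by lra.
  rewrite ln_mult by (apply sqrt_lt_R0; lra).
  field.
Qed.

Lemma one_le_ln (x : R) : 3 <= x -> 1 <= ln x.
Proof.
  intro hx.
  rewrite <- (ln_exp 1).
  apply ln_le; [apply exp_pos | pose proof exp_le_3; lra].
Qed.

Lemma g1_sqr (c1 c2 c3 c4 s : R) : 0 < c2 -> 0 < s ->
  g1 c1 c2 c3 c4 (s ^ 2) =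
    - c3 * s ^ 2 + c1 * s * (ln c2 + 2 * ln s) + 2 * c4 * ln s.
Proof.
  intros hc2 hs.
  unfold g1.
  rewrite sqrt_pow2 by lra.
  replace (s ^ 2) with (s * s) by ring.
  rewrite !ln_mult by nra.
  ring.
Qed.

Definition g1_bound (c2 c3 c4 : R) : R :=
  (3 * ln c2 ^ 2 + 24 * (ln (24 / c3) - 1) ^ 2) / c3
  + 3 * c3 + 2 * c4 * (ln (c4 / c3) - 1).

Lemma g1_le (c2 c3 c4 m : R) : 0 < c2 -> 0 < c3 -> 0 < c4 -> 0 < m ->
  g1 2 c2 c3 c4 m <= g1_bound c2 c3 c4.
Proof.
  intros hc2 hc3 hc4 hm.
  unfold g1_bound.
  set (s := sqrt m).
  assert (hs : 0 < s) by (apply sqrt_lt_R0; lra).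
  replace m with (s ^ 2) by (apply pow2_sqrt; lra).
  rewrite g1_sqr by lra.
  set (K := ln (24 / c3)).
  set (K' := ln (c4 / c3)).
  assert (piece1 : 2 * ln c2 * s - c3 / 3 * s ^ 2 <= 3 * ln c2 ^ 2 / c3).
  { replace (3 * ln c2 ^ 2 / c3) with ((2 * ln c2) ^ 2 / (4 * (c3 / 3)))
      by (field; lra).
    apply quadratic_le; lra. }
  assert (piece2 : 4 * s * ln s - c3 / 3 * s ^ 2 <= 24 * (K - 1) ^ 2 / c3).
  { assert (htan : ln s <= K + (s - 24 / c3) / (24 / c3))
      by (apply ln_le_tangent; try apply Rdiv_lt_0_compat; lra).
    replace ((s - 24 / c3) / (24 / c3)) with (c3 / 24 * s - 1) in htan
      by (field; lra).
    assert (4 * s * ln s - c3 / 3 * s ^ 2 <= 4 * (K - 1) * s - c3 / 6 * s ^ 2) by nra.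
    replace (24 * (K - 1) ^ 2 / c3) with ((4 * (K - 1)) ^ 2 / (4 * (c3 / 6)))
      by (field; lra).
    pose proof (quadratic_le (c3 / 6) (4 * (K - 1)) s).
    lra. }
  assert (piece3 : 2 * c4 * ln s - c3 / 3 * s ^ 2 <= 3 * c3 + 2 * c4 * (K' - 1)).
  { assert (htan : ln s <= K' + (s - c4 / c3) / (c4 / c3))
      by (apply ln_le_tangent; try apply Rdiv_lt_0_compat; lra).
    replace ((s - c4 / c3) / (c4 / c3)) with (c3 / c4 * s - 1) in htan
      by (field; lra).
    assert (2 * c4 * ln s <= 2 * c3 * s + 2 * c4 * (K' - 1)).
    { replace (2 * c3 * s) with (2 * c4 * (c3 / c4 * s)) by (field; lra). nra. }
    replace (3 * c3) with ((2 * c3) ^ 2 / (4 * (c3 / 3))) by (field; lra).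
    pose proof (quadratic_le (c3 / 3) (2 * c3) s).
    lra. }
  unfold Rdiv in *.
  lra.
Qed.

Lemma g1_bound_le (c2 c3 c4 : R) : 4 <= c2 -> 0 < c3 < 1 -> 16 <= c4 ->
  g1_bound c2 c3 c4 <= 264 * c4 / c3 * ln (10 * sqrt (c2 * c4) / c3) ^ 2.
Proof.
  intros hc2 hc3 hc4.
  unfold g1_bound.
  set (L := ln (10 * sqrt (c2 * c4) / c3)).
  assert (hL : L = ln 10 + ln c2 / 2 + ln c4 / 2 - ln c3).
  { assert (0 < sqrt (c2 * c4)) by (apply sqrt_lt_R0; nra).
    unfold L.
    rewrite ln_div, ln_mult, ln_sqrt by nra.
    rewrite ln_mult by lra.
    field. }
  rewrite !ln_div by lra.
  assert (h10 : 1 <= ln 10) by (apply one_le_ln; lra).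
  assert (h24 : 1 <= ln 24) by (apply one_le_ln; lra).
  assert (h24' : ln 24 <= ln 10 + ln 4).
  { rewrite <- ln_mult by lra. apply ln_le; lra. }
  assert (h4 : 0 <= ln 4) by (rewrite <- ln_1; apply ln_le; lra).
  assert (hc2' : ln 4 <= ln c2) by (apply ln_le; lra).
  assert (hc4' : 2 * ln 4 <= ln c4).
  { replace (2 * ln 4) with (ln (4 * 4)) by (rewrite ln_mult; lra).
    apply ln_le; lra. }
  assert (hc3' : ln c3 < 0) by (rewrite <- ln_1; apply ln_increasing; lra).
  assert (hL1 : 1 <= L) by lra.
  set (X := L ^ 2 / c3).
  assert (hX : L ^ 2 <= X).
  { unfold X. apply (Rmult_le_reg_l c3); [lra|].
    replace (c3 * (L ^ 2 / c3)) with (L ^ 2) by (field; lra). nra. }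
  assert (hsq : (3 * ln c2 ^ 2 + 24 * (ln 24 - ln c3 - 1) ^ 2) / c3 <= 36 * X).
  { unfold X, Rdiv. rewrite <- Rmult_assoc.
    apply Rmult_le_compat_r; [left; apply Rinv_0_lt_compat; lra | nra]. }
  assert (hlog : 2 * c4 * (ln c4 - ln c3 - 1) <= 4 * c4 * X).
  { replace (4 * c4 * X) with (2 * c4 * (2 * X)) by ring.
    apply Rmult_le_compat_l; nra. }
  replace (264 * c4 / c3 * L ^ 2) with (264 * c4 * X) by (unfold X, Rdiv; ring).
  nra.
Qed.

Theorem lemma1 (c1 c2 c3 c4 H : R)
  (hc1 : c1 = 2) (hc2 : 4 <= c2) (hc3 : 0 < c3 < 1)
  (hH : 2 <= H) (hc4 : c4 = 8 * H) :
  forall m : R, 2 <= m ->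
    g1 c1 c2 c3 c4 m <=
      132 * c1 * c4 / c3 * (ln (10 * sqrt (c2 * c4) / c3)) ^ 2.
Proof.
  intros m hm.
  subst c1.
  replace (132 * 2 * c4 / c3) with (264 * c4 / c3) by (unfold Rdiv; ring).
  eapply Rle_trans.
  - apply g1_le; lra.
  - apply g1_bound_le; lra.
Qed.
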